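(* In the setting of the context, $A$ and $B$ are separable $k$-algebras.
   Context: $k$ is a field; $C_R(S)=\{r\in R:rs=sr\ \forall s\in S\}$. $N\subseteq M$ is a strongly separable, irreducible extension of $k$-algebras: $C_M(N)=k1$ and there are an $N$-bimodule map $E:M\to N$ and $x_1,\dots,x_n,y_1,\dots,y_n\in M$ with $\sum_iE(mx_i)y_i=m=\sum_ix_iE(y_im)$ for all $m\in M$, $E(1)\neq0$, $\sum_ix_iy_i\neq0$; normalized so that $E(1)=1$, whence $\sum_ix_iy_i=\lambda^{-1}1$ with $0\neq\lambda\in k$. Basic construction: given $S\subseteq R$, an $S$-bimodule map $E_S:R\to S$ with $E_S(1)=1$ and $r_i,s_i\in R$ with $\sum_iE_S(rr_i)s_i=r=\sum_ir_iE_S(s_ir)$ and $\sum_ir_is_i=\lambda^{-1}1$, set $R_1=R\otimes_SR$ with product $(a\otimes b)(c\otimes d)=aE_S(bc)\otimes d$, unit $\sum_ir_i\otimes s_i$, $R\subseteq R_1$ via $r\mapsto\sum_irr_i\otimes s_i$, $e=1\otimes1$, $E_R:R_1\to R$, $a\otimes b\mapsto\lambda ab$; then $E_R$, $\lambda^{-1}r_i\otimes1$, $1\otimes s_i$ satisfy the same conditions with the same $\lambda$. From $(N\subseteq M,E)$ get $M_1,e_1,E_M$; from $(M\subseteq M_1,E_M)$ get $M_2,e_2,E_{M_1}$. Let $A=C_{M_1}(N)$, $B=C_{M_2}(M)$. Depth 2 is assumed: $M_1$ is free as right $M$-module with basis in $A$, $M_2$ free as right $M_1$-module with basis in $B$.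 A $k$-algebra $D$ is separable if the multiplication $D\otimes_kD\to D$ has a right inverse as a $D$-$D$-bimodule map. *)

From HB Require Import structures.
From mathcomp Require Import all_boot all_order all_algebra.
Set Implicit Arguments. Unset Strict Implicit. Unset Printing Implicit Defensive.
Import GRing.Theory.
Local Open Scope ring_scope.

Definition scalars (k : fieldType) (R : algType k) : R -> Prop :=
  fun s => exists c : k, s = c%:A.

Definition centralizer (R : ringType) (S : R -> Prop) : R -> Prop :=
  fun r => forall s, S s -> r * s = s * r.

Definition balanced_biadd (R : ringType) (D S : R -> Prop) (V : zmodType)
    (f : R -> R -> V) : Prop :=
  [/\ forall a a' b, D a -> D a' -> D b -> f (a + a') b = f a b + f a' b,
      forall a b b', D a -> D b -> D b' -> f a (b + b') = f a b + f a b' &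
      forall a s b, D a -> S s -> D b -> f (a * s) b = f a (s * b)].

(* (T, t) is a tensor product D (x)_S D (D a right and left S-module inside R),
   defined by its universal property as an abelian group. *)
Definition is_tensor (R : ringType) (D S : R -> Prop) (T : zmodType)
    (t : R -> R -> T) : Prop :=
  balanced_biadd D S t /\
  forall (V : zmodType) (f : R -> R -> V), balanced_biadd D S f ->
    exists g : T -> V,
      [/\ forall u v, g (u + v) = g u + g v,
          forall a b, D a -> D b -> g (t a b) = f a b &
          forall g' : T -> V, (forall u v, g' (u + v) = g' u + g' v) ->
            (forall a b, D a -> D b -> g' (t a b) = f a b) -> g' =1 g].

(* D (a k-subalgebra of R) is a separable k-algebra: for a (any) tensor product
   (T, t) = D (x)_k D, the multiplication map mu : T -> D, t a b |-> a b, has a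
   right inverse sigma which is a D-D-bimodule map.  The bimodule actions on T
   are the (unique) additive maps with  t x y |-> t (a x) y  resp.
   t x y |-> t x (y a). *)
Definition separable_sub (k : fieldType) (R : algType k) (D : R -> Prop) : Prop :=
  forall (T : zmodType) (t : R -> R -> T), is_tensor D (@scalars k R) t ->
  exists sigma : R -> T,
    [/\ forall d d', D d -> D d' -> sigma (d + d') = sigma d + sigma d',
        forall a d (L : T -> T), D a -> D d ->
          (forall u v, L (u + v) = L u + L v) ->
          (forall x y, D x -> D y -> L (t x y) = t (a * x) y) ->
          L (sigma d) = sigma (a * d),
        forall a d (L : T -> T), D a -> D d ->
          (forall u v, L (u + v) = L u + L v) ->
          (forall x y, D x -> D y -> L (t x y) = t x (y * a)) ->
          L (sigma d) = sigma (d * a) &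
        forall mu : T -> R, (forall u v, mu (u + v) = mu u + mu v) ->
          (forall x y, D x -> D y -> mu (t x y) = x * y) ->
          forall d, D d -> mu (sigma d) = d].

(* Inclusion R -> R (x)_S R of the basic construction: r |-> sum_i r r_i (x) s_i. *)
Definition bc_incl (R : ringType) (T : zmodType) (t : R -> R -> T) (n : nat)
    (r_ s_ : 'I_n -> R) (r : R) : T :=
  \sum_(i < n) t (r * r_ i) (s_ i).

Definition free_right_basis_in (R' Z : ringType) (j : R' -> Z) (P : Z -> Prop) : Prop :=
  exists (m : nat) (b : 'I_m -> Z),
    [/\ forall l, P (b l),
        forall z, exists c : 'I_m -> R', z = \sum_(l < m) b l * j (c l) &
        forall c : 'I_m -> R', \sum_(l < m) b l * j (c l) = 0 -> forall l, c l = 0].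

From HB Require Import structures.
From mathcomp Require Import all_boot all_order all_algebra.
From Stdlib Require Import IndefiniteDescription.
Set Implicit Arguments. Unset Strict Implicit. Unset Printing Implicit Defensive.
Import GRing.Theory.
Local Open Scope ring_scope.

(* Irreducibility forces the expectation E_M : M_1 -> M to map A = C_{M_1}(N)
   into k, so it is a k-valued trace on A.  By depth 2, M_1 has a right
   M-basis (b_l) inside A; its coordinate forms are E_M (w_l * _) for
   elements w_l that again lie in A, and (b_l), (w_l) are dual bases of A for
   this trace with sum_l b_l w_l = lam^-1.  Hence lam sum_l b_l (x) w_l is a
   separability idempotent of A.  The basic construction turns N <= M into
   M <= M_1, again strongly separable and irreducible with the same lam, so
   the same argument applies to B = C_{M_2}(M). *)

Section AdditiveMaps.
Variables (V W : zmodType) (f : V -> W).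
Hypothesis fD : forall u v, f (u + v) = f u + f v.

Lemma addf0 : f 0 = 0.
Proof. by apply: (addrI (f 0)); rewrite -fD !addr0. Qed.

Lemma addfN u : f (- u) = - f u.
Proof. by apply/eqP; rewrite -addr_eq0 -fD addNr addf0. Qed.

Lemma addfB u v : f (u - v) = f u - f v.
Proof. by rewrite fD addfN. Qed.

Lemma addf_sum (I : Type) (r : seq I) (P : pred I) (F : I -> V) :
  f (\sum_(i <- r | P i) F i) = \sum_(i <- r | P i) f (F i).
Proof. exact: (big_morph f fD addf0). Qed.

End AdditiveMaps.

Lemma addf_sum_on (V W : zmodType) (D : V -> Prop) (f : V -> W)
    (I : Type) (r : seq I) (P : pred I) (F : I -> V) :
  D 0 -> (forall u v, D u -> D v -> D (u + v)) ->
  (forall u v, D u -> D v -> f (u + v) = f u + f v) ->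
  (forall i, D (F i)) ->
  f (\sum_(i <- r | P i) F i) = \sum_(i <- r | P i) f (F i).
Proof.
move=> D0 DD fD DF; have f0 : f 0 = 0 by apply: (addrI (f 0)); rewrite -fD // !addr0.
suff [] : D (\sum_(i <- r | P i) F i) /\
          f (\sum_(i <- r | P i) F i) = \sum_(i <- r | P i) f (F i) by [].
apply: (big_ind2 (fun u w => D u /\ f u = w)) => // u1 w1 u2 w2 [Du1 <-] [Du2 <-].
by split; [exact: DD | exact: fD].
Qed.

Lemma is_tensor_ext (R : nzRingType) (D S : R -> Prop) (T V : zmodType)
    (t : R -> R -> T) (g1 g2 : T -> V) :
  is_tensor D S t ->
  (forall u v, g1 (u + v) = g1 u + g1 v) ->
  (forall u v, g2 (u + v) = g2 u + g2 v) ->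
  (forall a b, D a -> D b -> g1 (t a b) = g2 (t a b)) -> g1 =1 g2.
Proof.
move=> [[tDl tDr tS] univ] g1D g2D g12.
have g2t_bal : balanced_biadd D S (fun a b => g2 (t a b)).
  by split=> *; rewrite ?tDl ?tDr ?g2D ?tS.
have [g [_ _ g_uniq]] := univ V _ g2t_bal.
by move=> u; rewrite (g_uniq g1) // (g_uniq g2).
Qed.

Lemma is_tensor_mul (R : nzRingType) (S : R -> Prop) (T : zmodType)
    (t : R -> R -> T) :
  is_tensor (fun _ => True) S t ->
  exists mu : T -> R,
    (forall u v, mu (u + v) = mu u + mu v) /\ forall a b, mu (t a b) = a * b.
Proof.
move=> [_ univ].
have mul_bal : balanced_biadd (fun _ => True) S ( *%R : R -> R -> R).
  by split=> *; rewrite ?mulrDl ?mulrDr ?mulrA.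
by have [mu [muD mut _]] := univ _ _ mul_bal; exists mu; split=> // a b; apply: mut.
Qed.

Section Centralizer.
Variables (k : fieldType) (R : algType k) (S : R -> Prop).
Local Notation C := (centralizer S).

Lemma centralizer0 : C 0.
Proof. by move=> z _; rewrite mul0r mulr0. Qed.

Lemma centralizerD a b : C a -> C b -> C (a + b).
Proof. by move=> Ca Cb z Sz; rewrite mulrDl mulrDr Ca // Cb. Qed.

Lemma centralizerM a b : C a -> C b -> C (a * b).
Proof. by move=> Ca Cb z Sz; rewrite -mulrA Cb // mulrA Ca // mulrA. Qed.

Lemma centralizerZ (c : k) a : C a -> C (c *: a).
Proof. by move=> Ca z Sz; rewrite -scalerAl Ca // scalerAr. Qed.

End Centralizer.

Section DualBasesSeparable.
Variables (k : fieldType) (R : algType k) (D : R -> Prop).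
Hypothesis D0 : D 0.
Hypothesis DD : forall a b, D a -> D b -> D (a + b).
Hypothesis DM : forall a b, D a -> D b -> D (a * b).
Hypothesis DZ : forall (c : k) a, D a -> D (c *: a).
Variables (m : nat) (b w : 'I_m -> R) (tr : R -> R) (c : k).
Hypothesis Db : forall l, D (b l).
Hypothesis Dw : forall l, D (w l).
Hypothesis tr_scalar : forall u, D u -> scalars (tr u).
Hypothesis expand_b : forall y, D y -> y = \sum_(l < m) b l * tr (w l * y).
Hypothesis expand_w : forall y, D y -> y = \sum_(l < m) tr (y * b l) * w l.
Hypothesis casimir : \sum_(l < m) b l * w l = c%:A.
Hypothesis c_neq0 : c != 0.

Lemma D_scalarl s a : scalars s -> D a -> D (s * a).
Proof. by move=> [e ->] Da; rewrite mulr_algl; apply: DZ. Qed.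

Lemma D_scalarr s a : scalars s -> D a -> D (a * s).
Proof. by move=> [e ->] Da; rewrite mulr_algr; apply: DZ. Qed.

Section Tensor.
Variables (T : zmodType) (t : R -> R -> T).
Hypothesis t_tensor : is_tensor D (@scalars k R) t.

Lemma tensor_suml (I : Type) (r : seq I) (P : pred I) (F : I -> R) y :
  (forall i, D (F i)) -> D y ->
  t (\sum_(i <- r | P i) F i) y = \sum_(i <- r | P i) t (F i) y.
Proof.
have [[tDl _ _] _] := t_tensor.
move=> DF Dy; apply: (addf_sum_on (D := D) (f := t^~ y)) => // a a' Da Da'.
exact: tDl.
Qed.

Lemma tensor_sumr (I : Type) (r : seq I) (P : pred I) (F : I -> R) y :
  (forall i, D (F i)) -> D y ->
  t y (\sum_(i <- r | P i) F i) = \sum_(i <- r | P i) t y (F i).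
Proof.
have [[_ tDr _] _] := t_tensor.
move=> DF Dy; apply: (addf_sum_on (D := D) (f := t y)) => // a a' Da Da'.
exact: tDr.
Qed.

(* Expand [a * b l] along [b], then [w i * a] along [w]. *)
Lemma casimir_balanced u a : D u -> D a ->
  \sum_(l < m) t (u * a * b l) (w l) = \sum_(l < m) t (u * b l) (w l * a).
Proof.
move=> Du Da; have [[_ _ tS] _] := t_tensor.
have tr_sc i l : scalars (tr (w i * (a * b l))) by apply/tr_scalar/DM/DM.
have expand_ab l : t (u * a * b l) (w l) =
    \sum_(i < m) t (u * b i) (tr (w i * (a * b l)) * w l).
  rewrite -mulrA {1}(expand_b (DM Da (Db l))) mulr_sumr tensor_suml //.
    by apply: eq_bigr => i _; rewrite mulrA tS //; apply: DM.
  by move=> i; apply/DM/D_scalarr.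
rewrite (eq_bigr _ (fun l _ => expand_ab l)) exchange_big /=.
apply: eq_bigr => i _.
rewrite -tensor_sumr; [|by move=> l; apply: D_scalarl | exact: DM].
congr (t _ _); rewrite [RHS]expand_w; last exact: DM.
by apply: eq_bigr => l _; rewrite mulrA.
Qed.

End Tensor.

Lemma separable_of_dual_bases : separable_sub D.
Proof.
move=> T t t_tensor; have [[tDl _ _] _] := t_tensor.
have Dcb d l : D d -> D (c^-1 *: (d * b l)) by move=> Dd; apply/DZ/DM.
exists (fun d => \sum_(l < m) t (c^-1 *: (d * b l)) (w l)); split.
- move=> d d' Dd Dd'; rewrite -big_split; apply: eq_bigr => l _.
  by rewrite mulrDl scalerDr tDl //; apply: Dcb.
- move=> a d L Da Dd LD Lt; rewrite (addf_sum LD); apply: eq_bigr => l _.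
  by rewrite Lt; [rewrite -scalerAr mulrA | exact: Dcb | exact: Dw].
- move=> a d L Da Dd LD Lt; rewrite (addf_sum LD).
  have Lt_l l : L (t (c^-1 *: (d * b l)) (w l)) = t (c^-1 *: d * b l) (w l * a).
    by rewrite Lt; [rewrite scalerAl | exact: Dcb | exact: Dw].
  rewrite (eq_bigr _ (fun l _ => Lt_l l)) -casimir_balanced //; last exact: DZ.
  by apply: eq_bigr => l _; rewrite -!scalerAl.
- move=> mu muD mut d Dd; rewrite (addf_sum muD).
  have mut_l l : mu (t (c^-1 *: (d * b l)) (w l)) = c^-1 *: d * (b l * w l).
    by rewrite mut; [rewrite mulrA scalerAl | exact: Dcb | exact: Dw].
  rewrite (eq_bigr _ (fun l _ => mut_l l)) -mulr_sumr casimir mulr_algr.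
  by rewrite scalerA mulfV // scale1r.
Qed.

End DualBasesSeparable.

(* The strongly separable extension of the paper, with E, x_i, y_i, lam
   becoming EP, r i, s i, lam, and the inclusion made an explicit morphism
   [j] so that it covers the inclusions M -> M_1 -> M_2. *)
Record strongly_separable_ext (k : fieldType) (Q P : algType k) (j : Q -> P)
    (EP : P -> Q) (n : nat) (r s : 'I_n -> P) (lam : k) : Prop :=
  StronglySeparableExt {
    ext_add : forall a b, j (a + b) = j a + j b;
    ext_mul : forall a b, j (a * b) = j a * j b;
    ext_scalar : forall c : k, j c%:A = c%:A;
    exp_add : forall u v, EP (u + v) = EP u + EP v;
    exp_mull : forall q z, EP (j q * z) = q * EP z;
    exp_mulr : forall q z, EP (z * j q) = EP z * q;
    dual_basis_l : forall z, z = \sum_(i < n) r i * j (EP (s i * z));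
    dual_basis_r : forall z, z = \sum_(i < n) j (EP (z * r i)) * s i;
    dual_basis_index : \sum_(i < n) r i * s i = lam^-1%:A;
    index_neq0 : lam != 0 }.

Section StronglySeparableExt.
Variables (k : fieldType) (Q P : algType k) (j : Q -> P) (EP : P -> Q).
Variables (n : nat) (r s : 'I_n -> P) (lam : k).
Hypothesis ext : strongly_separable_ext j EP r s lam.

Lemma ext_one : j 1 = 1.
Proof. by have := ext_scalar ext 1; rewrite !scale1r. Qed.

Lemma exp_nondegenerate u v : (forall z, EP (u * z) = EP (v * z)) -> u = v.
Proof.
move=> uv; rewrite (dual_basis_r ext u) (dual_basis_r ext v).
by apply: eq_bigr => i _; rewrite uv.
Qed.

Definition dual_elt (f : P -> Q) : P := \sum_(i < n) j (f (r i)) * s i.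

Section LinearForm.
Variable f : P -> Q.
Hypothesis fD : forall u v, f (u + v) = f u + f v.
Hypothesis fMr : forall z q, f (z * j q) = f z * q.

Lemma exp_dual_elt z : EP (dual_elt f * z) = f z.
Proof.
rewrite [in RHS](dual_basis_l ext z) (addf_sum fD) mulr_suml (addf_sum (exp_add ext)).
by apply: eq_bigr => i _; rewrite -mulrA (exp_mull ext) fMr.
Qed.

Lemma dual_elt_centralizer (S : P -> Prop) :
  (forall w, S w -> exists q, w = j q) ->
  (forall q z, S (j q) -> f (j q * z) = q * f z) ->
  centralizer S (dual_elt f).
Proof.
move=> Sj fMl w Sw; have [q wq] := Sj w Sw; subst w.
apply: exp_nondegenerate => z.
by rewrite -!mulrA exp_dual_elt (exp_mull ext) exp_dual_elt fMl.
Qed.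

End LinearForm.

Section DepthTwo.
Variable S : P -> Prop.
Hypothesis S_image : forall w, S w -> exists q, w = j q.
Hypothesis irreducible :
  forall q, (forall q', S (j q') -> q * q' = q' * q) -> scalars q.
Variables (m : nat) (b : 'I_m -> P).
Hypothesis b_centralizer : forall l, centralizer S (b l).
Hypothesis b_span : forall z, exists c, z = \sum_(l < m) b l * j (c l).
Hypothesis b_free :
  forall c, \sum_(l < m) b l * j (c l) = 0 -> forall l, c l = 0.

Definition coord (z : P) : 'I_m -> Q :=
  proj1_sig (constructive_indefinite_description _ (b_span z)).

Lemma coordE z : z = \sum_(l < m) b l * j (coord z l).
Proof. by rewrite /coord; case: constructive_indefinite_description. Qed.

Lemma coord_unique z c : z = \sum_(l < m) b l * j (c l) -> forall l, coord z l = c l.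
Proof.
move=> zc l; apply/eqP; rewrite -subr_eq0; apply/eqP.
apply: (@b_free (fun i => coord z i - c i)).
under eq_bigr => i _ do rewrite (addfB (ext_add ext)) mulrBr.
by rewrite sumrB -coordE -zc subrr.
Qed.

Lemma coordD z z' l : coord (z + z') l = coord z l + coord z' l.
Proof.
apply: (@coord_unique _ (fun i => coord z i + coord z' i)).
under eq_bigr => i _ do rewrite (ext_add ext) mulrDr.
by rewrite big_split -!coordE.
Qed.

Lemma coordMr z q l : coord (z * j q) l = coord z l * q.
Proof.
apply: (@coord_unique _ (fun i => coord z i * q)).
under eq_bigr => i _ do rewrite (ext_mul ext) mulrA.
by rewrite -mulr_suml -coordE.
Qed.

Lemma coordMl z q l : S (j q) -> coord (j q * z) l = q * coord z l.
Proof.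
move=> Sq; apply: (@coord_unique _ (fun i => q * coord z i)).
under eq_bigr => i _ do rewrite (ext_mul ext) mulrA b_centralizer // -mulrA.
by rewrite -mulr_sumr -coordE.
Qed.

Definition b_dual (l : 'I_m) : P := dual_elt (coord^~ l).

Lemma exp_b_dual l z : EP (b_dual l * z) = coord z l.
Proof. by apply: exp_dual_elt => [u v|u q]; [exact: coordD | exact: coordMr]. Qed.

Lemma b_dual_centralizer l : centralizer S (b_dual l).
Proof.
apply: dual_elt_centralizer => // [u v|u q|q z]; first exact: coordD.
- exact: coordMr.
- exact: coordMl.
Qed.

Lemma expand_b z : z = \sum_(l < m) b l * j (EP (b_dual l * z)).
Proof. by rewrite {1}(coordE z); apply: eq_bigr => l _; rewrite exp_b_dual. Qed.

Lemma expand_b_dual z : z = \sum_(l < m) j (EP (z * b l)) * b_dual l.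
Proof.
apply: exp_nondegenerate => z'; rewrite {1}(coordE z') mulr_sumr mulr_suml.
rewrite !(addf_sum (exp_add ext)); apply: eq_bigr => l _.
by rewrite mulrA (exp_mulr ext) -mulrA (exp_mull ext) exp_b_dual.
Qed.

Lemma casimir_b : \sum_(l < m) b l * b_dual l = lam^-1%:A.
Proof.
rewrite -(dual_basis_index ext); under eq_bigr => l _ do rewrite mulr_sumr.
rewrite exchange_big /=; apply: eq_bigr => i _.
by under eq_bigr => l _ do rewrite mulrA; rewrite -mulr_suml -coordE.
Qed.

Lemma exp_centralizer_scalar u : centralizer S u -> scalars (j (EP u)).
Proof.
move=> Cu; have [c ->] : scalars (EP u).
  by apply: irreducible => q Sq; rewrite -(exp_mulr ext) Cu // (exp_mull ext).
by exists c; rewrite (ext_scalar ext).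
Qed.

Lemma centralizer_separable_of_basis : separable_sub (centralizer S).
Proof.
apply: (@separable_of_dual_bases _ _ (centralizer S) (@centralizer0 _ _ S)
  (@centralizerD _ _ S) (@centralizerM _ _ S) (@centralizerZ _ _ S)
  _ b b_dual (j \o EP) lam^-1 b_centralizer b_dual_centralizer
  exp_centralizer_scalar _ _ casimir_b).
- by move=> y _; apply: expand_b.
- by move=> y _; apply: expand_b_dual.
- by rewrite invr_eq0 (index_neq0 ext).
Qed.

End DepthTwo.
End StronglySeparableExt.

Lemma centralizer_separable (k : fieldType) (Q P : algType k) (j : Q -> P)
    (EP : P -> Q) (n : nat) (r s : 'I_n -> P) (lam : k) (S : P -> Prop) :
  strongly_separable_ext j EP r s lam ->
  (forall w, S w -> exists q, w = j q) ->
  (forall q, (forall q', S (j q') -> q * q' = q' * q) -> scalars q) ->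
  free_right_basis_in j (centralizer S) -> separable_sub (centralizer S).
Proof.
move=> ext S_image irreducible [m [b [b_centralizer b_span b_free]]].
exact: (centralizer_separable_of_basis ext S_image irreducible b_centralizer
  b_span b_free).
Qed.

Record quasi_basis_expectation (k : fieldType) (R : algType k)
    (S0 : R -> Prop) (ES : R -> R) (n : nat) (x y : 'I_n -> R) : Prop :=
  QuasiBasisExpectation {
    qbe_scalar : forall c : k, S0 c%:A;
    qbe_range : forall m, S0 (ES m);
    qbe_basis_r : forall m, \sum_(i < n) ES (m * x i) * y i = m;
    qbe_basis_l : forall m, \sum_(i < n) x i * ES (y i * m) = m;
    qbe_unit : ES 1 = 1 }.

Lemma image_quasi_basis_expectation (k : fieldType) (Q P : algType k)
    (j : Q -> P) (EP : P -> Q) (n : nat) (r s : 'I_n -> P) (lam : k) :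
  strongly_separable_ext j EP r s lam -> EP 1 = 1 ->
  quasi_basis_expectation (fun z => exists q, z = j q) (fun z => j (EP z)) r s.
Proof.
move=> ext EP1; split.
- by move=> c; exists c%:A; rewrite (ext_scalar ext).
- by move=> z; exists (EP z).
- by move=> z; rewrite -(dual_basis_r ext).
- by move=> z; rewrite -(dual_basis_l ext).
- by rewrite EP1 (ext_one ext).
Qed.

Section BasicConstruction.
Variables (k : fieldType) (R R1 : algType k) (S0 : R -> Prop) (ES : R -> R).
Variables (n : nat) (x y : 'I_n -> R) (lam : k).
Hypothesis lam_neq0 : lam != 0.
Hypothesis ES_qb : quasi_basis_expectation S0 ES x y.
Variables (t : R -> R -> R1) (ER : R1 -> R).
Hypothesis t_tensor : is_tensor (fun _ => True) S0 t.
Hypothesis tZl : forall (c : k) a b, t (c *: a) b = c *: t a b.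
Hypothesis t_mul : forall a b c d, t a b * t c d = t (a * ES (b * c)) d.
Hypothesis t_one : 1 = \sum_(i < n) t (x i) (y i).
Hypothesis ER_add : forall u v, ER (u + v) = ER u + ER v.
Hypothesis ER_t : forall a b, ER (t a b) = lam *: (a * b).

Local Notation j := (bc_incl t x y).
Local Notation r := (fun i => lam^-1 *: t (x i) 1).
Local Notation s := (fun i => t 1 (y i)).

Lemma bcDl a a' b : t (a + a') b = t a b + t a' b.
Proof. by case: t_tensor => [[tD _ _] _]; apply: tD. Qed.

Lemma bcDr a b b' : t a (b + b') = t a b + t a b'.
Proof. by case: t_tensor => [[_ tD _] _]; apply: tD. Qed.

Lemma bc_bal a s0 b : S0 s0 -> t (a * s0) b = t a (s0 * b).
Proof. by case: t_tensor => [[_ _ tS] _] S0s0; apply: tS. Qed.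

Lemma bc_bal_exp a m b : t (a * ES m) b = t a (ES m * b).
Proof. exact/bc_bal/(qbe_range ES_qb). Qed.

Lemma bcZr c a b : t a (c *: b) = c *: t a b.
Proof.
by rewrite -mulr_algl -bc_bal; [rewrite mulr_algr tZl | exact: (qbe_scalar ES_qb)].
Qed.

Lemma bc_suml (I : Type) (rr : seq I) (P : pred I) (F : I -> R) b :
  t (\sum_(i <- rr | P i) F i) b = \sum_(i <- rr | P i) t (F i) b.
Proof. exact: (addf_sum (fun u v => bcDl u v b)). Qed.

Lemma bc_sumr (I : Type) (rr : seq I) (P : pred I) (F : I -> R) a :
  t a (\sum_(i <- rr | P i) F i) = \sum_(i <- rr | P i) t a (F i).
Proof. exact: (addf_sum (bcDr a)). Qed.

Lemma bc_hom_ext (V : zmodType) (g1 g2 : R1 -> V) :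
  (forall u v, g1 (u + v) = g1 u + g1 v) ->
  (forall u v, g2 (u + v) = g2 u + g2 v) ->
  (forall a b, g1 (t a b) = g2 (t a b)) -> g1 =1 g2.
Proof. by move=> g1D g2D g12; apply: (is_tensor_ext t_tensor) => // a b _ _. Qed.

Lemma bc_inclD a b : j (a + b) = j a + j b.
Proof.
by rewrite /bc_incl -big_split; apply: eq_bigr => i _; rewrite mulrDl bcDl.
Qed.

Lemma bc_incl1 : j 1 = 1.
Proof. by rewrite t_one; apply: eq_bigr => i _; rewrite mul1r. Qed.

Lemma bc_inclA c : j c%:A = c%:A.
Proof.
rewrite -bc_incl1 /bc_incl scaler_sumr.
by apply: eq_bigr => i _; rewrite -scalerAl tZl mul1r.
Qed.

Lemma bc_incl_mull m a b : j m * t a b = t (m * a) b.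
Proof.
rewrite /bc_incl mulr_suml; under eq_bigr => i _ do rewrite t_mul -mulrA.
by rewrite -bc_suml -mulr_sumr (qbe_basis_l ES_qb).
Qed.

Lemma bc_incl_mulr a b m : t a b * j m = t a (b * m).
Proof.
rewrite /bc_incl mulr_sumr.
under eq_bigr => i _ do rewrite t_mul bc_bal_exp mulrA.
by rewrite -bc_sumr (qbe_basis_r ES_qb).
Qed.

Lemma bc_inclM a b : j (a * b) = j a * j b.
Proof.
rewrite {3}/bc_incl mulr_sumr.
by under eq_bigr => i _ do rewrite bc_incl_mull mulrA.
Qed.

Lemma bc_exp_mull q z : ER (j q * z) = q * ER z.
Proof.
move: z; apply: bc_hom_ext => [u v|u v|a b].
- by rewrite mulrDr ER_add.
- by rewrite ER_add mulrDr.
- by rewrite bc_incl_mull !ER_t -scalerAr mulrA.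
Qed.

Lemma bc_exp_mulr q z : ER (z * j q) = ER z * q.
Proof.
move: z; apply: bc_hom_ext => [u v|u v|a b].
- by rewrite mulrDl ER_add.
- by rewrite ER_add mulrDl.
- by rewrite bc_incl_mulr !ER_t -scalerAl mulrA.
Qed.

Lemma bc_expZ c z : ER (c *: z) = c *: ER z.
Proof. by rewrite -mulr_algl -bc_inclA bc_exp_mull mulr_algl. Qed.

Lemma r_bc_incl i m : r i * j m = lam^-1 *: t (x i) m.
Proof. by rewrite -scalerAl bc_incl_mulr mul1r. Qed.

Lemma bc_dual_basis_l z : z = \sum_(i < n) r i * j (ER (s i * z)).
Proof.
symmetry; move: z; apply: (bc_hom_ext (g2 := id)) => [u v|//|a b] /=.
- by rewrite -big_split; apply: eq_bigr => i _; rewrite mulrDr ER_add bc_inclD mulrDr.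
- under eq_bigr => i _ do
    rewrite r_bc_incl t_mul mul1r ER_t bcZr scalerA mulVf // scale1r -bc_bal_exp.
  by rewrite -bc_suml (qbe_basis_l ES_qb).
Qed.

Lemma bc_dual_basis_r z : z = \sum_(i < n) j (ER (z * r i)) * s i.
Proof.
symmetry; move: z; apply: (bc_hom_ext (g2 := id)) => [u v|//|a b] /=.
- by rewrite -big_split; apply: eq_bigr => i _; rewrite mulrDl ER_add bc_inclD mulrDl.
- under eq_bigr => i _ do
    rewrite -scalerAr t_mul bc_expZ ER_t mulr1 scalerA mulVf // scale1r
            bc_incl_mull mulr1 bc_bal_exp.
  by rewrite -bc_sumr (qbe_basis_r ES_qb).
Qed.

Lemma bc_dual_basis_index : \sum_(i < n) r i * s i = lam^-1%:A.
Proof.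
under eq_bigr => i _ do rewrite -scalerAl t_mul mul1r (qbe_unit ES_qb) mulr1.
by rewrite -scaler_sumr -t_one.
Qed.

Lemma bc_strongly_separable : strongly_separable_ext j ER r s lam.
Proof.
split.
- exact: bc_inclD.
- exact: bc_inclM.
- exact: bc_inclA.
- exact: ER_add.
- exact: bc_exp_mull.
- exact: bc_exp_mulr.
- exact: bc_dual_basis_l.
- exact: bc_dual_basis_r.
- exact: bc_dual_basis_index.
- exact: lam_neq0.
Qed.

Lemma bc_exp1 : \sum_(i < n) x i * y i = lam^-1%:A -> ER 1 = 1.
Proof.
move=> xy; rewrite t_one (addf_sum ER_add); under eq_bigr => i _ do rewrite ER_t.
by rewrite -scaler_sumr xy scalerA mulfV // scale1r.
Qed.

(* [z * t m 1 = t (f m) 1] for a map [f] that is left [R]-linear and right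
   [S0]-linear, so [f 1] lies in [C_R(S0) = k] and [z = f 1]. *)
Lemma bc_irreducible :
  (forall q, centralizer S0 q -> scalars q) ->
  forall z, (forall m, z * j m = j m * z) -> scalars z.
Proof.
move=> irreducible z zC.
pose f m := \sum_(i < n) lam^-1 *: (x i * ES (ER (s i * z) * m)).
have zt m : z * t m 1 = t (f m) 1.
  rewrite {1}(bc_dual_basis_l z) mulr_suml bc_suml; apply: eq_bigr => i _.
  by rewrite r_bc_incl -scalerAl t_mul tZl.
have t_inj a b : t a 1 = t b 1 -> a = b.
  by move/(congr1 ER); rewrite !ER_t !mulr1; apply: scalerI.
have jt m : j m * t 1 1 = t m 1 by rewrite bc_incl_mull mulr1.
have tj m q : t m 1 * j q = t m q by rewrite bc_incl_mulr mul1r.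
have fM m : f m = m * f 1.
  by apply: t_inj; rewrite -zt -jt mulrA zC -mulrA zt bc_incl_mull.
have fMS0 m s0 : S0 s0 -> f (m * s0) = f m * s0.
  move=> S0s0; apply: t_inj.
  by rewrite -zt bc_bal // mulr1 -tj mulrA zt tj [RHS]bc_bal // mulr1.
have [c f1] : scalars (f 1).
  by apply: irreducible => s0 S0s0; rewrite -fM -[s0]mul1r fMS0 // mul1r.
exists c; rewrite -[z]mulr1 t_one mulr_sumr scaler_sumr; apply: eq_bigr => i _.
have -> : t (x i) (y i) = t (x i) 1 * t 1 (y i).
  by rewrite t_mul mul1r (qbe_unit ES_qb) mulr1.
by rewrite mulrA zt !t_mul !mul1r (qbe_unit ES_qb) !mulr1 fM f1 mulr_algr tZl.
Qed.

End BasicConstruction.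

Theorem proposition3p2
  (k : fieldType) (M : algType k) (N : M -> Prop)
  (* N is a k-subalgebra of M *)
  (HN1 : N 1)
  (HNadd : forall a b, N a -> N b -> N (a + b))
  (HNopp : forall a, N a -> N (- a))
  (HNmul : forall a b, N a -> N b -> N (a * b))
  (HNscale : forall (c : k) a, N a -> N (c *: a))
  (* irreducible: C_M(N) = k 1 *)
  (Hirr : forall m, centralizer N m <-> scalars m)
  (* strongly separable: E, x_i, y_i *)
  (E : M -> M)
  (HEN : forall m, N (E m))
  (HEadd : forall a b, E (a + b) = E a + E b)
  (HEbimod : forall a m b, N a -> N b -> E (a * m * b) = a * E m * b)
  (n : nat) (x y : 'I_n -> M)
  (HEx : forall m, \sum_(i < n) E (m * x i) * y i = m)
  (HxE : forall m, \sum_(i < n) x i * E (y i * m) = m)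
  (HE1 : E 1 = 1)
  (lam : k) (Hlam : lam != 0)
  (Hxy : \sum_(i < n) x i * y i = lam^-1%:A)
  (* first basic construction M1 = M (x)_N M *)
  (M1 : algType k) (t1 : M -> M -> M1)
  (Ht1 : is_tensor (fun _ => True) N t1)
  (Ht1scale : forall (c : k) a b, t1 (c *: a) b = c *: t1 a b)
  (Ht1mul : forall a b c d, t1 a b * t1 c d = t1 (a * E (b * c)) d)
  (Ht1one : 1 = \sum_(i < n) t1 (x i) (y i))
  (EM : M1 -> M)
  (HEMadd : forall u v, EM (u + v) = EM u + EM v)
  (HEMt : forall a b, EM (t1 a b) = lam *: (a * b))
  (* second basic construction M2 = M1 (x)_M M1, with the data
     lam^-1 x_i (x) 1 and 1 (x) y_i *)
  (M2 : algType k) (t2 : M1 -> M1 -> M2)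
  (Ht2 : is_tensor (fun _ => True)
           (fun z => exists m, z = bc_incl t1 x y m) t2)
  (Ht2scale : forall (c : k) a b, t2 (c *: a) b = c *: t2 a b)
  (Ht2mul : forall a b c d,
     t2 a b * t2 c d = t2 (a * bc_incl t1 x y (EM (b * c))) d)
  (Ht2one : 1 = \sum_(i < n) t2 (lam^-1 *: t1 (x i) 1) (t1 1 (y i)))
  (* depth 2 *)
  (Hd2a : free_right_basis_in (bc_incl t1 x y)
            (centralizer (fun z => exists m, N m /\ z = bc_incl t1 x y m)))
  (Hd2b : free_right_basis_in
            (bc_incl t2 (fun i => lam^-1 *: t1 (x i) 1) (fun i => t1 1 (y i)))
            (centralizer (fun w => exists m, w =
               bc_incl t2 (fun i => lam^-1 *: t1 (x i) 1) (fun i => t1 1 (y i))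
                 (bc_incl t1 x y m)))) :
  separable_sub (centralizer (fun z => exists m, N m /\ z = bc_incl t1 x y m))
  /\ separable_sub (centralizer (fun w => exists m, w =
       bc_incl t2 (fun i => lam^-1 *: t1 (x i) 1) (fun i => t1 1 (y i))
         (bc_incl t1 x y m))).
Proof.
have qbN : quasi_basis_expectation N E x y by split=> // c; apply: HNscale.
have ext1 := bc_strongly_separable Hlam qbN Ht1 Ht1scale Ht1mul Ht1one HEMadd HEMt.
have [mu [muD mut]] := is_tensor_mul Ht2.
have EM1D u v : lam *: mu (u + v) = lam *: mu u + lam *: mu v.
  by rewrite muD scalerDr.
have EM1t a b : lam *: mu (t2 a b) = lam *: (a * b) by rewrite mut.
have qbM := image_quasi_basis_expectation ext1 (bc_exp1 Hlam Ht1one HEMadd HEMt Hxy).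
have ext2 := bc_strongly_separable Hlam qbM Ht2 Ht2scale Ht2mul Ht2one EM1D EM1t.
split.
- apply: (centralizer_separable ext1 _ _ Hd2a) => [_ [m [_ ->]]|q qC].
    by exists m.
  by apply/Hirr => m Nm; apply: qC; exists m.
- apply: (centralizer_separable ext2 _ _ Hd2b) => [_ [m ->]|q qC].
    by exists (bc_incl t1 x y m).
  apply: (bc_irreducible Hlam qbN Ht1 Ht1scale Ht1mul Ht1one HEMadd HEMt).
    by move=> q' /Hirr.
  by move=> m; apply: qC; exists m.
Qed.
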